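(* Let $\mathbb{F}$ be a field and let $m,n,r,d$ be integers with $m,n\ge2$, $d\ge1$ and $0<r<\min\{m,n\}$. Then $$\mathbb{F}[\lambda]^{m\times n}_{d,r}=\Big\{L(\lambda)R(\lambda): L\in\mathbb{F}[\lambda]^{m\times r},\ R\in\mathbb{F}[\lambda]^{r\times n},\ \deg(L_{*i})\le d,\ \deg(R_{i*})\le d,\ \deg(L_{*i})+\deg(R_{i*})\le d\ \text{for } i=1,\dots,r\Big\}.$$
   Context: $\mathbb{F}[\lambda]^{m\times n}_{d,r}$ is the set of $m\times n$ polynomial matrices over $\mathbb{F}$ of degree at most $d$ and normal rank (rank over $\mathbb{F}(\lambda)$) at most $r$. Degree of a polynomial vector: maximum degree of its entries, with $\deg 0=-\infty$. $L_{*i}$ is the $i$th column of $L$ and $R_{i*}$ the $i$th row of $R$. *)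

From HB Require Import structures.
From mathcomp Require Import all_boot all_order all_algebra.
From mathcomp Require Import fraction.
Set Implicit Arguments. Unset Strict Implicit. Unset Printing Implicit Defensive.
Import Order.TTheory GRing.Theory Num.Theory.
Local Open Scope ring_scope.

(* Degrees with -oo: None = -oo (degree of the zero polynomial/vector),
   Some k = degree k. *)
Definition ext_deg := option nat.

Definition deg_le (x : ext_deg) (d : nat) : bool :=
  match x with None => true | Some k => (k <= d)%N end.

Definition deg_add (x y : ext_deg) : ext_deg :=
  match x, y with Some a, Some b => Some (a + b)%N | _, _ => None end.

Definition col_deg (F : fieldType) (m r : nat) (L : 'M[{poly F}]_(m, r)) (i : 'I_r)
  : ext_deg :=
  let s := (\max_(k < m) size (L k i))%N in
  if s == 0%N then None else Some s.-1.

Definition row_deg (F : fieldType) (r n : nat) (R : 'M[{poly F}]_(r, n)) (i : 'I_r)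
  : ext_deg :=
  let s := (\max_(k < n) size (R i k))%N in
  if s == 0%N then None else Some s.-1.

Definition normal_rank (F : fieldType) (m n : nat) (P : 'M[{poly F}]_(m, n)) : nat :=
  \rank (map_mx (@FracField.tofrac {poly F}) P).

Definition in_Fdr (F : fieldType) (m n d r : nat) (P : 'M[{poly F}]_(m, n)) : Prop :=
  (forall i j, (size (P i j) <= d.+1)%N) /\ (normal_rank P <= r)%N.

(* Row reduce the trivial factorization P = 1 * P: while the leading row
   coefficient matrix of R (row i holding the coefficients of degree deg R_i of
   R_i) has a dependence among its nonzero rows, a unimodular row operation
   lowers the degree of one row of R.  When this stops, R is row reduced and has
   the predictable degree property deg (a R) = max_i (deg a_i + deg R_i).
   Applied to the rows of L in P = L R it gives deg L_ki + deg R_i <= d; it also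
   makes the nonzero rows of R independent over F(lambda), and as R = L^-1 P
   there are at most rank P <= r of them.  Keeping these rows of R and the
   matching columns of L, none of which vanishes since L is unimodular, yields
   the factorization.  The converse is the degree bound for a product. *)

From HB Require Import structures.
From mathcomp Require Import all_boot all_order all_algebra.
From mathcomp Require Import fraction generic_quotient zify.
From Stdlib Require Import Classical.
Set Implicit Arguments. Unset Strict Implicit. Unset Printing Implicit Defensive.
Import GRing.Theory.
Local Open Scope ring_scope.
Local Open Scope quotient_scope.

Section PolyCoef.
Variable R : nzSemiRingType.
Implicit Types p q : {poly R}.

Lemma size_le_coef_top p s : (size p <= s.+1)%N -> p`_s = 0 -> (size p <= s)%N.
Proof.
move=> ps ps0; apply/leq_sizeP => j; rewrite leq_eqVlt => /predU1P [<- // | sj].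
by apply: nth_default; apply: leq_trans ps sj.
Qed.

Lemma size_XsubnM q s d :
  (size q <= s)%N -> (s <= d)%N -> (size ('X^(d - s)%N * q)%R <= d)%N.
Proof.
move=> qs sd; apply: leq_trans (size_polyMleq _ _) _; rewrite size_polyXn; lia.
Qed.

Lemma coef_XsubnM q s d :
  (size q <= s)%N -> (s <= d)%N -> ('X^(d - s)%N * q)`_d.-1 = q`_s.-1.
Proof.
move=> qs sd; case: s qs sd => [|s] qs sd.
  by move: qs; rewrite leqn0 size_poly_eq0 => /eqP ->; rewrite mulr0 !coef0.
by rewrite coefXnM ifF; [congr _`_ _|]; lia.
Qed.

End PolyCoef.

Lemma coef_mul_lead (R : idomainType) (p q : {poly R}) s :
  p != 0 -> (size q <= s.+1)%N -> (p * q)`_((size p).-1 + s) = lead_coef p * q`_s.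
Proof.
move=> p0 qs; have sp := size_poly_gt0 p; rewrite p0 in sp.
have [qs0 | qs0] := eqVneq q`_s 0.
  rewrite qs0 mulr0; apply: nth_default; apply: leq_trans (size_polyMleq _ _) _.
  by have := size_le_coef_top qs qs0; lia.
have q0 : q != 0 by apply: contraNneq qs0 => ->; rewrite coef0.
have sq : size q = s.+1.
  by apply/eqP; rewrite eqn_leq qs ltnNge; apply: contra qs0 => /leq_sizeP ->.
have := lead_coefM p q; rewrite /lead_coef size_mul // sq.
by have -> : ((size p + s.+1).-2 = (size p).-1 + s)%N by lia.
Qed.

Section ClearDenominators.
Variable R : idomainType.

Lemma mul_tofrac_den (x : {fraction R}) : x * tofrac \d_(repr x) = tofrac \n_(repr x).
Proof.
rewrite -{1}[x]reprK; move: (repr x) => y.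
change (FracField.mul (\pi y) (tofrac \d_y) = tofrac \n_y).
rewrite !piE; apply/eqmodP; rewrite /= FracField.equivfE /FracField.mulf /=.
by rewrite !numden_Ratio ?mulf_neq0 ?oner_eq0 ?denom_ratioP // !mulr1 mulrC.
Qed.

Lemma clear_denominators s (x : 'rV[{fraction R}]_s) :
  exists2 D : R, D != 0 & exists a : 'rV[R]_s, map_mx (@tofrac _) a = tofrac D *: x.
Proof.
pose den t := \d_(repr (x 0 t)).
exists (\prod_t den t); first by apply/prodf_neq0 => t _; exact: denom_ratioP.
exists (\row_t (\n_(repr (x 0 t)) * \prod_(t' | t' != t) den t')).
apply/rowP => t; rewrite !mxE [in RHS](bigD1 t) //= !rmorphM -mulrA mulrCA mulrC.
by rewrite [_ * x 0 t]mulrC mul_tofrac_den.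
Qed.

End ClearDenominators.

Lemma unitmx_1D_sq0 (R : comUnitRingType) n (N : 'M[R]_n) :
  N *m N = 0 -> 1 + N \in unitmx.
Proof.
move=> NN; have : (1 - N) *m (1 + N) = 1%:M.
  by rewrite mulmxBl mul1mx mulmxDr mulmx1 NN addr0 addrK.
by case/mulmx1_unit.
Qed.

Section RowReduced.
Variable F : fieldType.
Implicit Types m n : nat.

Definition row_size m n (A : 'M[{poly F}]_(m, n)) (i : 'I_m) : nat :=
  \max_(j < n) size (A i j).

Definition row_size_sum m n (A : 'M[{poly F}]_(m, n)) : nat :=
  \sum_(i < m) row_size A i.

Definition lead_row_mx m n (A : 'M[{poly F}]_(m, n)) : 'M[F]_(m, n) :=
  \matrix_(i, j) (A i j)`_(row_size A i).-1.

Definition row_reduced m n (A : 'M[{poly F}]_(m, n)) : Prop :=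
  forall c : 'rV[F]_m, c *m lead_row_mx A = 0 ->
    forall i, row_size A i != 0%N -> c 0 i = 0.

Lemma size_le_row_size m n (A : 'M[{poly F}]_(m, n)) i j : (size (A i j) <= row_size A i)%N.
Proof. exact: (leq_bigmax (F := fun j => size (A i j))). Qed.

Lemma row_size0_entry m n (A : 'M[{poly F}]_(m, n)) i j : row_size A i = 0%N -> A i j = 0.
Proof. by move=> A0; apply/eqP; rewrite -size_poly_leq0 -A0 size_le_row_size. Qed.

Lemma row_size0 m n i : row_size (0 : 'M[{poly F}]_(m, n)) i = 0%N.
Proof. by apply: big1 => j _; rewrite mxE size_poly0. Qed.

Lemma predictable_degree m n (a : 'rV[{poly F}]_m) (A : 'M[{poly F}]_(m, n)) i :
  row_reduced A -> a 0 i != 0 -> row_size A i != 0%N ->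
  (size (a 0%R i) + row_size A i <= (row_size (a *m A) 0%R).+1)%N.
Proof.
move=> redA ai0 Ai0.
pose w k := if (a 0 k != 0) && (row_size A k != 0%N)
            then (size (a 0%R k) + row_size A k)%N else 0%N.
have [k0 wk0] : {k0 | \max_k w k = w k0}.
  by apply: eq_bigmax; rewrite card_ord (leq_ltn_trans _ (ltn_ord i)).
set N := \max_k w k in wk0.
have wN k : (w k <= N)%N := leq_bigmax k.
have wi : w i = (size (a 0%R i) + row_size A i)%N by rewrite /w ai0 Ai0.
have N2 : (2 <= N)%N.
  by have := wN i; rewrite wi -size_poly_gt0 in ai0 *; move: ai0 Ai0; lia.
(* Only the terms with deg a_k + deg A_k = N.-2 reach the coefficient of degree N.-2. *)
pose c : 'rV[F]_m := \row_k if w k == N then lead_coef (a 0 k) else 0.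
have coefN j : ((a *m A) 0 j)`_N.-2 = (c *m lead_row_mx A) 0 j.
  rewrite !mxE coef_sum; apply: eq_bigr => k _; rewrite !mxE.
  have [wkN | wkN] := eqVneq (w k) N.
    move: wkN; rewrite /w; case: ifP => [/andP [ak0 Ak0] wkN | _ N0]; last by lia.
    have sa : (0 < size (a 0%R k))%N by rewrite size_poly_gt0.
    have -> : N.-2 = ((size (a 0%R k)).-1 + (row_size A k).-1)%N.
      by move: Ak0; rewrite -lt0n; lia.
    by rewrite coef_mul_lead // prednK ?size_le_row_size // lt0n.
  rewrite mul0r nth_default //.
  have [-> | ak0] := eqVneq (a 0 k) 0; first by rewrite mul0r size_poly0.
  have [Ak0 | Ak0] := eqVneq (row_size A k) 0%N.
    by rewrite (row_size0_entry j Ak0) mulr0 size_poly0.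
  have wk : w k = (size (a 0%R k) + row_size A k)%N by rewrite /w ak0 Ak0.
  apply: leq_trans (size_polyMleq _ _) _.
  have ltN : (w k < N)%N by rewrite ltn_neqAle wkN wN.
  have := size_le_row_size A k j; rewrite wk in ltN.
  (* [set] identifies copies of a term that differ only in hidden instance
     arguments, which [lia] would otherwise treat as distinct atoms. *)
  by set sa := size (a 0 k); set sA := size (A k j); lia.
have /andP [ak0 Ak0] : (a 0 k0 != 0) && (row_size A k0 != 0%N).
  by move: N2; rewrite wk0 /w; case: ifP.
have ck0 : c 0 k0 != 0 by rewrite mxE -wk0 eqxx lead_coef_eq0.
have /rV0Pn [j cAj] : c *m lead_row_mx A != 0.
  by apply: contra ck0 => /eqP cA0; rewrite (redA c cA0 k0 Ak0).
have : (N.-2 < size ((a *m A) 0%R j))%N.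
  by rewrite ltnNge; apply: contra cAj => /leq_sizeP/(_ _ (leqnn _)); rewrite coefN => ->.
have := size_le_row_size (a *m A) 0 j; have := wN i; rewrite wi.
by set s := size ((a *m A) 0 j); set r := row_size (a *m A) 0; lia.
Qed.

Lemma row_size_sum_lt m n (A B : 'M[{poly F}]_(m, n)) i0 :
  (forall i, i != i0 -> row_size B i = row_size A i) ->
  (row_size B i0 < row_size A i0)%N -> (row_size_sum B < row_size_sum A)%N.
Proof.
move=> BA ltB; rewrite /row_size_sum (bigD1 i0) //= [X in (_ < X)%N](bigD1 i0) //=.
by rewrite -addSn leq_add // (eq_bigr _ BA).
Qed.

Lemma not_row_reduced_dep m n (R : 'M[{poly F}]_(m, n)) :
  ~ row_reduced R -> exists c : 'rV[F]_m,
    c *m lead_row_mx R = 0 /\ exists i, row_size R i != 0%N /\ c 0 i != 0.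
Proof.
move=> nred; apply: NNPP => nex; apply: nred => c cR0 i Ri; apply: NNPP => /eqP ci.
by apply: nex; exists c; split=> //; exists i.
Qed.

Lemma size_lead_row_cancel m n (c : 'rV[F]_m) (R : 'M[{poly F}]_(m, n)) d j :
  c *m lead_row_mx R = 0 -> (forall k, c 0 k != 0 -> (row_size R k <= d)%N) ->
  (size (\sum_k (c 0 k)%:P * 'X^(d - row_size R k)%N * R k j)%R <= d.-1)%N.
Proof.
move=> cR0 cRd; apply: size_le_coef_top.
  apply: leq_trans (size_sum _ _ _) (leq_trans _ (leqSpred d)).
  apply/bigmax_leqP => k _; rewrite -mulrA mul_polyC.
  have [-> | ck0] := eqVneq (c 0 k) 0; first by rewrite scale0r size_poly0.
  exact: leq_trans (size_scale_leq _ _) (size_XsubnM (size_le_row_size _ _ _) (cRd _ ck0)).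
move/matrixP/(_ 0 j): cR0; rewrite !mxE => cRj.
rewrite coef_sum -[RHS]cRj; apply: eq_bigr => k _.
rewrite -mulrA coefCM mxE; have [-> | ck0] := eqVneq (c 0 k) 0; first by rewrite !mul0r.
by rewrite (coef_XsubnM (size_le_row_size _ _ _) (cRd _ ck0)).
Qed.

Lemma row_reduce_step m n (R : 'M[{poly F}]_(m, n)) :
  ~ row_reduced R ->
  exists2 E : 'M_m, E \in unitmx & (row_size_sum (E *m R) < row_size_sum R)%N.
Proof.
case/not_row_reduced_dep => c [cR0 [i1 [Ri1 ci1]]].
have [i0 ci0 maxi0] := @arg_maxnP _ i1 (fun k => c 0 k != 0) (row_size R) ci1.
set d0 := row_size R i0.
have Rd0 : (0 < d0)%N by apply: leq_trans (maxi0 i1 ci1); rewrite lt0n.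
pose c' := (c 0 i0)^-1 *: c.
have c'R0 : c' *m lead_row_mx R = 0 by rewrite -scalemxAl cR0 scaler0.
have c'R k : c' 0 k != 0 -> (row_size R k <= d0)%N.
  by rewrite mxE mulf_eq0 negb_or => /andP [_ /maxi0].
pose w k := (c' 0 k)%:P * 'X^(d0 - row_size R k)%N.
pose N : 'M_m := \matrix_(i, k) (((i == i0) && (k != i0))%:R * w k).
(* [1 + N] replaces row [i0] of [R] by [\sum_k w k * R k], whose top coefficients cancel. *)
have NN : N *m N = 0.
  apply/matrixP => i k; rewrite !mxE big1 // => l _; rewrite !mxE.
  by case: (l =P i0) => [-> | _]; rewrite ?eqxx ?andbF ?mul0r ?mulr0.
have ER i j : i != i0 -> ((1 + N) *m R) i j = R i j.
  move=> ii0; rewrite mulmxDl mul1mx mxE [X in _ + X]mxE big1 ?addr0 // => k _.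
  by rewrite mxE (negbTE ii0) !mul0r.
have ER0 j : ((1 + N) *m R) i0 j = \sum_k w k * R k j.
  rewrite mulmxDl mul1mx mxE [X in _ + X]mxE (bigD1 i0) //= mxE eqxx andbF !mul0r.
  rewrite add0r [RHS](bigD1 i0) //= /w mxE mulVf // subnn expr0 !mul1r.
  by congr (_ + _); apply: eq_bigr => k ki0; rewrite mxE eqxx ki0 mul1r.
exists (1 + N); first exact: unitmx_1D_sq0.
apply: (row_size_sum_lt (i0 := i0)).
  by move=> i ii0; apply: eq_bigr => j _; rewrite ER.
apply: (@leq_ltn_trans d0.-1); last by rewrite ltn_predL.
by apply/bigmax_leqP => j _; rewrite ER0; apply: size_lead_row_cancel.
Qed.

Lemma row_reduced_factor m n (P : 'M[{poly F}]_(m, n)) :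
  exists L R, [/\ L \in unitmx, P = L *m R & row_reduced R].
Proof.
suff IH k : forall L R, row_size_sum R = k -> L \in unitmx -> P = L *m R ->
    exists L R, [/\ L \in unitmx, P = L *m R & row_reduced R].
  exact: (IH _ 1%:M P erefl (unitmx1 _ _) (esym (mul1mx P))).
elim/ltn_ind: k => k IH L R Rk uL PLR.
have [redR | /row_reduce_step [E uE ltE]] := classic (row_reduced R).
  by exists L, R.
apply: (IH _ _ (L *m invmx E) (E *m R) erefl); first by rewrite -Rk.
  by rewrite unitmx_mul uL unitmx_inv.
by rewrite -mulmxA mulKmx.
Qed.

Lemma row_size_rowsub m m' n (f : 'I_m' -> 'I_m) (R : 'M[{poly F}]_(m, n)) i :
  row_size (rowsub f R) i = row_size R (f i).
Proof. by apply: eq_bigr => j _; rewrite mxE. Qed.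

Lemma lead_row_mx_rowsub m m' n (f : 'I_m' -> 'I_m) (R : 'M[{poly F}]_(m, n)) :
  lead_row_mx (rowsub f R) = rowsub f (lead_row_mx R).
Proof. by apply/matrixP => i j; rewrite !mxE row_size_rowsub. Qed.

Lemma row_reduced_rowsub m m' n (f : 'I_m' -> 'I_m) (R : 'M[{poly F}]_(m, n)) :
  injective f -> row_reduced R -> row_reduced (rowsub f R).
Proof.
move=> injf redR c cR0 i Ri.
have cfR0 : (c *m rowsub f 1%:M) *m lead_row_mx R = 0.
  by rewrite -mulmxA -rowsubE -lead_row_mx_rowsub.
rewrite row_size_rowsub in Ri.
rewrite -(redR _ cfR0 _ Ri) mxE (bigD1 i) //= big1 ?addr0 => [|k ki].
  by rewrite !mxE eqxx mulr1.
by rewrite !mxE (inj_eq injf) (negbTE ki) mulr0.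
Qed.

Lemma row_reduced_free m n (R : 'M[{poly F}]_(m, n)) :
  row_reduced R -> (forall i, row_size R i != 0%N) ->
  row_free (map_mx (@tofrac _) R).
Proof.
move=> redR R0; rewrite -kermx_eq0; apply/eqP/row_matrixP => t; rewrite row0.
set x := row t _.
have xR : x *m map_mx (@tofrac _) R = 0 by rewrite -row_mul mulmx_ker row0.
have [D D0 [a aE]] := clear_denominators x.
have aR : a *m R = 0.
  have : map_mx (@tofrac _) (a *m R) = 0 by rewrite map_mxM aE -scalemxAl xR scaler0.
  move/matrixP => aR0; apply/matrixP => i j; move/eqP: (aR0 i j).
  by rewrite !mxE tofrac_eq0 => /eqP.
have a0 : a = 0.
  apply/rowP => i; rewrite mxE; apply/eqP/negbNE/negP => ai.
  have := predictable_degree redR ai (R0 i); rewrite aR row_size0.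
  have := R0 i; rewrite -lt0n -size_poly_gt0 in ai *.
  by set sa := size (a 0 i); set ri := row_size R i; lia.
by move: aE; rewrite a0 map_mx0 => /esym/eqP; rewrite scalemx_eq0 tofrac_eq0 (negbTE D0) => /eqP.
Qed.

Lemma row_reduced_rank m n (R : 'M[{poly F}]_(m, n)) :
  row_reduced R -> (#|[set i | row_size R i != 0%N]| <= normal_rank R)%N.
Proof.
set S := [set i | _]; move=> redR.
pose g (t : 'I_#|S|) : 'I_m := enum_val t.
have RS0 t : row_size (rowsub g R) t != 0%N.
  by rewrite row_size_rowsub; have := enum_valP t; rewrite inE.
have /eqP <- := row_reduced_free (row_reduced_rowsub enum_val_inj redR) RS0.
have -> : map_mx (@tofrac _) (rowsub g R) = rowsub g (map_mx (@tofrac _) R).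
  by apply/matrixP => i j; rewrite !mxE.
exact/mxrankS/rowsub_sub.
Qed.

End RowReduced.

Lemma unitmx_col_neq0 (R : comUnitRingType) n (L : 'M[R]_n) i :
  L \in unitmx -> exists k, L k i != 0.
Proof.
move=> uL; apply/existsP/contraT => /existsPn L0.
move/matrixP/(_ i i): (mulVmx uL); rewrite !mxE eqxx big1 => [/eqP|k _].
  by rewrite eq_sym oner_eq0.
by move/negbNE/eqP: (L0 k) => ->; rewrite mulr0.
Qed.

Section Select.
Variable R : pzSemiRingType.

Definition col_select p s r (tau : 'I_r -> option 'I_s) (L : 'M[R]_(p, s)) :
  'M[R]_(p, r) := \matrix_(k, i) oapp (L k) 0 (tau i).

Definition row_select s q r (tau : 'I_r -> option 'I_s) (A : 'M[R]_(s, q)) :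
  'M[R]_(r, q) := \matrix_(i, j) oapp (fun t => A t j) 0 (tau i).

Lemma mulmx_select p s q r (L : 'M[R]_(p, s)) (A : 'M[R]_(s, q)) (S : {set 'I_s}) :
  (#|S| <= r)%N -> (forall i j, i \notin S -> A i j = 0) ->
  exists tau : 'I_r -> option 'I_s,
    (forall i t, tau i = Some t -> t \in S) /\
    L *m A = col_select tau L *m row_select tau A.
Proof.
move=> Sr A0; pose g (t : 'I_#|S|) : 'I_s := enum_val t.
exists (fun i => omap g (insub (val i))); split.
  by move=> i t; case: insubP => [u _ _ [<-]|_ //]; apply: enum_valP.
apply/matrixP => k j; rewrite !mxE (bigID (mem S)) /= [X in _ + X]big1 ?addr0.
  pose G x := oapp (fun t => L k (g t) * A (g t) j) 0 (insub x : option 'I_#|S|).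
  rewrite big_enum_val (eq_bigr (fun t => G (val t))) => [|t _]; last by rewrite /G valK.
  rewrite (big_ord_widen r G Sr) big_mkcond; apply: eq_bigr => i _; rewrite !mxE /G.
  by case: insubP => [t -> _|/negbTE ->] /=; rewrite ?mul0r.
by move=> i /A0 ->; rewrite mulr0.
Qed.

End Select.

Definition deg_of_size (s : nat) : ext_deg := if s == 0%N then None else Some s.-1.

Lemma deg_le_of_size s d : deg_le (deg_of_size s) d = (s <= d.+1)%N.
Proof. by case: s. Qed.

Lemma deg_le_add_of_size a b d :
  deg_le (deg_add (deg_of_size a) (deg_of_size b)) d =
  [|| a == 0%N, b == 0%N | (a + b <= d.+2)%N].
Proof. by case: a b => [|a] [|b] //=; rewrite addSn addnS. Qed.

Section DegreeBoundedFactorization.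
Variable F : fieldType.

Definition col_size m n (A : 'M[{poly F}]_(m, n)) (j : 'I_n) : nat :=
  \max_(k < m) size (A k j).

Lemma col_degE m n (A : 'M[{poly F}]_(m, n)) j : col_deg A j = deg_of_size (col_size A j).
Proof. by []. Qed.

Lemma row_degE m n (A : 'M[{poly F}]_(m, n)) i : row_deg A i = deg_of_size (row_size A i).
Proof. by []. Qed.

Lemma col_size_select p s r (tau : 'I_r -> option 'I_s) (L : 'M[{poly F}]_(p, s)) i :
  col_size (col_select tau L) i = oapp (col_size L) 0%N (tau i).
Proof.
rewrite /col_size; under eq_bigr do rewrite mxE.
by case: (tau i) => [t|] //=; rewrite big1 // => k _; rewrite size_poly0.
Qed.

Lemma row_size_select s q r (tau : 'I_r -> option 'I_s) (A : 'M[{poly F}]_(s, q)) i :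
  row_size (row_select tau A) i = oapp (row_size A) 0%N (tau i).
Proof.
rewrite /row_size; under eq_bigr do rewrite mxE.
by case: (tau i) => [t|] //=; rewrite big1 // => k _; rewrite size_poly0.
Qed.

Lemma in_Fdr_mul m n r d (L : 'M[{poly F}]_(m, r)) (R : 'M[{poly F}]_(r, n)) :
  (forall i, deg_le (deg_add (col_deg L i) (row_deg R i)) d) -> in_Fdr d r (L *m R).
Proof.
move=> degLR; split; last first.
  by rewrite /normal_rank map_mxM; apply: leq_trans (mxrankM_maxl _ _) (rank_leq_col _).
move=> k j; rewrite mxE; apply: leq_trans (size_sum _ _ _) _; apply/bigmax_leqP => i _.
have [-> | Lki] := eqVneq (L k i) 0; first by rewrite mul0r size_poly0.
have [-> | Rij] := eqVneq (R i j) 0; first by rewrite mulr0 size_poly0.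
have sL : (size (L k i) <= col_size L i)%N := leq_bigmax (F := fun k => size (L k i)) k.
have sR := size_le_row_size R i j.
apply: leq_trans (size_polyMleq _ _) _; rewrite -!size_poly_gt0 in Lki Rij.
move: (degLR i); rewrite col_degE row_degE deg_le_add_of_size.
set x := size (L k i) in sL Lki *; set y := size (R i j) in sR Rij *.
by case/or3P => [/eqP|/eqP|]; lia.
Qed.

Lemma in_Fdr_factor m n r d (P : 'M[{poly F}]_(m, n)) :
  in_Fdr d r P ->
  exists (L : 'M_(m, r)) (R : 'M_(r, n)),
    [/\ P = L *m R &
      forall i, [/\ deg_le (col_deg L i) d, deg_le (row_deg R i) d &
                    deg_le (deg_add (col_deg L i) (row_deg R i)) d]].
Proof.
case=> Psize Prank; have [L [R [uL PLR redR]]] := row_reduced_factor P.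
set S := [set i | row_size R i != 0%N].
have degLR k i : L k i != 0 -> i \in S -> (size (L k i) + row_size R i <= d.+2)%N.
  move=> Lki; rewrite inE => Ri.
  have := predictable_degree redR (a := row k L) _ Ri; rewrite mxE => /(_ Lki).
  move/leq_trans; apply; rewrite ltnS -row_mul -PLR.
  by apply/bigmax_leqP => j _; rewrite mxE Psize.
have sizeLR i : i \in S ->
    [/\ 0 < col_size L i, 0 < row_size R i & col_size L i + row_size R i <= d.+2]%N.
  move=> iS; have [k Lki] := unitmx_col_neq0 i uL.
  have colL : (col_size L i <= d.+2 - row_size R i)%N.
    apply/bigmax_leqP => k' _; have [-> | Lk'i] := eqVneq (L k' i) 0; first by rewrite size_poly0.
    by have := degLR k' i Lk'i iS; set y := size (L k' i); lia.
  have sL : (size (L k i) <= col_size L i)%N := leq_bigmax (F := fun k => size (L k i)) k.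
  have := degLR k i Lki iS; rewrite inE -lt0n in iS; rewrite -size_poly_gt0 in Lki.
  by set x := size (L k i) in sL Lki *; split; lia.
have sizeS : (#|S| <= r)%N.
  apply: leq_trans (row_reduced_rank redR) (leq_trans _ Prank).
  by rewrite /normal_rank -(mulKmx uL R) -PLR map_mxM mxrankM_maxr.
have R0 i j : i \notin S -> R i j = 0.
  by rewrite inE negbK => /eqP /row_size0_entry.
have [tau [tauS PE]] := mulmx_select L sizeS R0.
exists (col_select tau L), (row_select tau R); split; first by rewrite PLR.
move=> i; rewrite col_degE row_degE !deg_le_of_size deg_le_add_of_size.
rewrite col_size_select row_size_select.
case tau_i: (tau i) => [t|] //=.
by have [] := sizeLR t (tauS i t tau_i); split; rewrite // ?orbT; lia.
Qed.

End DegreeBoundedFactorization.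

Theorem theorem4p1 (F : fieldType) (m n r d : nat)
  (hm : (2 <= m)%N) (hn : (2 <= n)%N) (hd : (1 <= d)%N)
  (hr0 : (0 < r)%N) (hr : (r < minn m n)%N)
  (P : 'M[{poly F}]_(m, n)) :
  in_Fdr d r P <->
  exists (L : 'M[{poly F}]_(m, r)) (R : 'M[{poly F}]_(r, n)),
    [/\ P = L *m R &
      forall i : 'I_r,
        [/\ deg_le (col_deg L i) d, deg_le (row_deg R i) d &
            deg_le (deg_add (col_deg L i) (row_deg R i)) d]].
Proof.
split; first exact: in_Fdr_factor.
by case=> L [R [-> degLR]]; apply: in_Fdr_mul => i; case: (degLR i).
Qed.
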